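(* Let $\chi:\mathbb{D}\to\mathbb{E}$ be a notion of structure on a fibration $q:\mathbb{E}\to\mathbb{B}$. The following are equivalent: (1) for every object $X$ of $\mathbb{E}$ the presheaf $\bar\chi_X$ on $\mathbb{B}/q(X)$ is representable; (2) $\operatorname{Cart}(\chi)$ has a right adjoint (i.e. $\chi$ is definable); (3) $\operatorname{Cart}(\chi)$ is comonadic.
   Context: All fibrations are cloven (chosen reindexing $\sigma^*X$ with cartesian $\bar\sigma:\sigma^*X\to X$). For a fibration $\mathbb{E}\to\mathbb{B}$, $\operatorname{Cart}(\mathbb{E})$ is the wide subcategory of cartesian morphisms; for a functor $\chi$ preserving cartesian morphisms, $\operatorname{Cart}(\chi)$ is its restriction. A notion of structure on a fibration $q:\mathbb{E}\to\mathbb{B}$ is a fibration $p:\mathbb{D}\to\mathbb{B}$ together with a functor $\chi:\mathbb{D}\to\mathbb{E}$ with $q\circ\chi=p$, preserving cartesian morphisms, such that $\operatorname{Cart}(\chi):\operatorname{Cart}(\mathbb{D})\to\operatorname{Cart}(\mathbb{E})$ is a discrete fibration. It is definable if $\operatorname{Cart}(\chi)$ has a right adjoint as an ordinary functor. For $X\in\mathbb{E}$, $\bar\chi_X$ is the presheaf on $\mathbb{B}/q(X)$ sending $\sigma:I\to q(X)$ to the set of objects $D$ of $\mathbb{D}$ with $\chi(D)=\sigma^*(X)$, with functorial action induced by the unique cartesian lifts in $\operatorname{Cart}(\chi)$. *)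

From Stdlib Require Import ProofIrrelevance.
Set Implicit Arguments.
Unset Strict Implicit.

Record Category := {
  ob :> Type;
  hom : ob -> ob -> Type;
  idm : forall a, hom a a;
  cmp : forall a b c, hom b c -> hom a b -> hom a c;
  cmp_idl : forall a b (f : hom a b), cmp (idm b) f = f;
  cmp_idr : forall a b (f : hom a b), cmp f (idm a) = f;
  cmp_assoc : forall a b c d (h : hom c d) (g : hom b c) (f : hom a b),
      cmp h (cmp g f) = cmp (cmp h g) f }.

Arguments hom {_} _ _.
Arguments idm {_} _.
Arguments cmp {_ _ _ _} _ _.

Record Functor (C D : Category) := {
  fob :> ob C -> ob D;
  fmap : forall a b, hom a b -> hom (fob a) (fob b);
  fmap_id : forall a, fmap (idm a) = idm (fob a);
  fmap_cmp : forall a b c (g : hom b c) (f : hom a b),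
      fmap (cmp g f) = cmp (fmap g) (fmap f) }.

Arguments fmap {_ _} _ {_ _} _.

Definition IdF (C : Category) : Functor C C.
Proof.
  refine {| fob := fun a => a; fmap := fun a b f => f |}; reflexivity.
Defined.

Definition CompF (C D E : Category) (G : Functor D E) (F : Functor C D) : Functor C E.
Proof.
  refine {| fob := fun a => G (F a); fmap := fun a b f => fmap G (fmap F f) |}.
  - intros a; rewrite !fmap_id; reflexivity.
  - intros a b c g f; rewrite !fmap_cmp; reflexivity.
Defined.

(* A morphism packaged with its domain and codomain: used to compare
   morphisms whose (co)domains are only propositionally equal. *)
Definition arr (C : Category) (a b : C) (f : hom a b) : {x : C & {y : C & hom x y}} :=
  existT _ a (existT _ b f).

Definition NatIso (C D : Category) (F G : Functor C D) : Prop :=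
  exists (al : forall x, hom (F x) (G x)) (be : forall x, hom (G x) (F x)),
    (forall a b (f : hom a b), cmp (fmap G f) (al a) = cmp (al b) (fmap F f)) /\
    (forall x, cmp (be x) (al x) = idm (F x) /\ cmp (al x) (be x) = idm (G x)).

Definition IsEquivalence (C D : Category) (F : Functor C D) : Prop :=
  exists G : Functor D C,
    NatIso (CompF G F) (IdF C) /\ NatIso (CompF F G) (IdF D).

Record IsAdjunction (C D : Category) (L : Functor C D) (R : Functor D C)
    (eta : forall c, hom c (R (L c))) (eps : forall d, hom (L (R d)) d) : Prop := {
  eta_nat : forall a b (f : hom a b),
      cmp (fmap R (fmap L f)) (eta a) = cmp (eta b) f;
  eps_nat : forall a b (g : hom a b),
      cmp g (eps a) = cmp (eps b) (fmap L (fmap R g));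
  tri_L : forall c, cmp (eps (L c)) (fmap L (eta c)) = idm (L c);
  tri_R : forall d, cmp (fmap R (eps d)) (eta (R d)) = idm (R d) }.

Arguments IsAdjunction {C D} L R eta eps.

Definition has_right_adjoint (C D : Category) (L : Functor C D) : Prop :=
  exists (R : Functor D C) (eta : forall c, hom c (R (L c)))
         (eps : forall d, hom (L (R d)) d), IsAdjunction L R eta eps.

Lemma sig_eq_hprop (A : Type) (P : A -> Prop) (x y : {a : A | P a}) :
  proj1_sig x = proj1_sig y -> x = y.
Proof.
  destruct x as [x px], y as [y py]; simpl; intros ->.
  f_equal; apply proof_irrelevance.
Qed.

(* Coalgebras for the comonad L R (counit eps, comultiplication L eta R) *)
Section Coalg.
Variables (C D : Category) (L : Functor C D) (R : Functor D C)
          (eta : forall c, hom c (R (L c))) (eps : forall d, hom (L (R d)) d).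

Definition coalg_ob : Type :=
  {d : D & {al : hom d (L (R d)) |
     cmp (eps d) al = idm d /\
     cmp (fmap L (eta (R d))) al = cmp (fmap L (fmap R al)) al}}.

Definition coalg_str (x : coalg_ob) : hom (projT1 x) (L (R (projT1 x))) :=
  proj1_sig (projT2 x).

Definition coalg_hom (x y : coalg_ob) : Type :=
  {f : hom (projT1 x) (projT1 y) |
     cmp (coalg_str y) f = cmp (fmap L (fmap R f)) (coalg_str x)}.

Lemma coalg_id_prf (x : coalg_ob) :
  cmp (coalg_str x) (idm (projT1 x)) = cmp (fmap L (fmap R (idm _))) (coalg_str x).
Proof. rewrite !fmap_id, cmp_idl, cmp_idr; reflexivity. Qed.

Lemma coalg_cmp_prf (x y z : coalg_ob) (g : coalg_hom y z) (f : coalg_hom x y) :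
  cmp (coalg_str z) (cmp (proj1_sig g) (proj1_sig f)) =
  cmp (fmap L (fmap R (cmp (proj1_sig g) (proj1_sig f)))) (coalg_str x).
Proof.
  destruct g as [g pg], f as [f pf]; simpl.
  rewrite cmp_assoc, pg, <- cmp_assoc, pf, cmp_assoc, !fmap_cmp; reflexivity.
Qed.

Definition Coalg : Category.
Proof.
  refine {| ob := coalg_ob; hom := coalg_hom;
            idm := fun x => exist _ (idm _) (coalg_id_prf x);
            cmp := fun x y z g f => exist _ (cmp (proj1_sig g) (proj1_sig f))
                                           (coalg_cmp_prf g f) |}.
  - intros a b f; apply sig_eq_hprop; simpl; apply cmp_idl.
  - intros a b f; apply sig_eq_hprop; simpl; apply cmp_idr.
  - intros a b c d h g f; apply sig_eq_hprop; simpl; apply cmp_assoc.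
Defined.

Hypothesis adj : IsAdjunction L R eta eps.

Lemma comparison_ob_prf (c : C) :
  cmp (eps (L c)) (fmap L (eta c)) = idm (L c) /\
  cmp (fmap L (eta (R (L c)))) (fmap L (eta c)) =
  cmp (fmap L (fmap R (fmap L (eta c)))) (fmap L (eta c)).
Proof.
  split; [apply (tri_L adj)|].
  rewrite <- !fmap_cmp, (eta_nat adj); reflexivity.
Qed.

Definition comparison_ob (c : C) : Coalg :=
  existT _ (L c) (exist _ (fmap L (eta c)) (comparison_ob_prf c)).

Lemma comparison_hom_prf (a b : C) (f : hom a b) :
  cmp (coalg_str (comparison_ob b)) (fmap L f) =
  cmp (fmap L (fmap R (fmap L f))) (coalg_str (comparison_ob a)).
Proof.
  unfold coalg_str; simpl. rewrite <- !fmap_cmp, (eta_nat adj); reflexivity.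
Qed.

Definition Comparison : Functor C Coalg.
Proof.
  refine {| fob := comparison_ob;
            fmap := fun a b f => exist _ (fmap L f) (comparison_hom_prf f) |}.
  - intros a; apply sig_eq_hprop; simpl; apply fmap_id.
  - intros a b c g f; apply sig_eq_hprop; simpl; apply fmap_cmp.
Defined.

End Coalg.

Definition comonadic (C D : Category) (L : Functor C D) : Prop :=
  exists (R : Functor D C) (eta : forall c, hom c (R (L c)))
         (eps : forall d, hom (L (R d)) d) (adj : IsAdjunction L R eta eps),
    IsEquivalence (Comparison adj).

Definition cartesian (E B : Category) (P : Functor E B) (Y X : E) (f : hom Y X) : Prop :=
  forall (Z : E) (g : hom Z X) (h : hom (P Z) (P Y)),
    cmp (fmap P f) h = fmap P g ->
    exists k : hom Z Y, (fmap P k = h /\ cmp f k = g) /\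
      forall k' : hom Z Y, fmap P k' = h -> cmp f k' = g -> k' = k.

Lemma cartesian_id (E B : Category) (P : Functor E B) (X : E) :
  cartesian P (idm X).
Proof.
  intros Z g h H. rewrite fmap_id, cmp_idl in H.
  exists g; split; [split; [symmetry; exact H| apply cmp_idl]|].
  intros k' _ Hk; rewrite cmp_idl in Hk; exact Hk.
Qed.

Lemma cartesian_cmp (E B : Category) (P : Functor E B) (W Y X : E)
  (f1 : hom Y X) (f2 : hom W Y) :
  cartesian P f1 -> cartesian P f2 -> cartesian P (cmp f1 f2).
Proof.
  intros c1 c2 Z g h H.
  rewrite fmap_cmp, <- cmp_assoc in H.
  destruct (c1 Z g _ H) as [k1 [[Pk1 fk1] u1]].
  destruct (c2 Z k1 h (eq_sym Pk1)) as [k2 [[Pk2 fk2] u2]].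
  exists k2; split; [split; [exact Pk2|]|].
  - rewrite <- cmp_assoc, fk2; exact fk1.
  - intros k' Pk' fk'.
    apply u2; [exact Pk'|].
    apply u1; [rewrite fmap_cmp, Pk'; reflexivity|].
    rewrite cmp_assoc; exact fk'.
Qed.

Record Fibration (E B : Category) := {
  fib :> Functor E B;
  reindex : forall (X : E) (I : B), hom I (fib X) -> E;
  clift : forall (X : E) (I : B) (s : hom I (fib X)), hom (reindex s) X;
  clift_cart : forall X I (s : hom I (fib X)), cartesian fib (clift s);
  clift_over : forall X I (s : hom I (fib X)), arr (fmap fib (clift s)) = arr s }.

Arguments reindex {_ _} _ {_ _} _.
Arguments clift {_ _} _ {_ _} _.

Definition CartCat (E B : Category) (P : Functor E B) : Category.
Proof.
  refine {| ob := ob E; hom := fun a b => {f : hom a b | cartesian P f};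
            idm := fun a => exist _ (idm a) (@cartesian_id _ _ P a);
            cmp := fun a b c g f => exist _ (cmp (proj1_sig g) (proj1_sig f))
                     (cartesian_cmp (proj2_sig g) (proj2_sig f)) |}.
  - intros a b f; apply sig_eq_hprop; simpl; apply cmp_idl.
  - intros a b f; apply sig_eq_hprop; simpl; apply cmp_idr.
  - intros a b c d h g f; apply sig_eq_hprop; simpl; apply cmp_assoc.
Defined.

Definition CartFunctor (D E B : Category) (p : Functor D B) (q : Functor E B)
  (chi : Functor D E)
  (H : forall a b (f : hom a b), cartesian p f -> cartesian q (fmap chi f)) :
  Functor (CartCat p) (CartCat q).
Proof.
  refine {| fob := fun a : CartCat p => (chi a : CartCat q);
            fmap := fun (a b : CartCat p) (f : @hom (CartCat p) a b) =>
                      exist _ (fmap chi (proj1_sig f)) (H _ _ _ (proj2_sig f)) |}.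
  - intros a; apply sig_eq_hprop; simpl; apply fmap_id.
  - intros a b c g f; apply sig_eq_hprop; simpl; apply fmap_cmp.
Defined.

Definition discrete_fibration (C D : Category) (F : Functor C D) : Prop :=
  forall (c : C) (d : D) (u : hom d (F c)),
    exists (c' : C) (v : hom c' c), arr (fmap F v) = arr u /\
      forall (c'' : C) (v' : hom c'' c), arr (fmap F v') = arr u ->
        existT (fun x => hom x c) c'' v' = existT (fun x => hom x c) c' v.

Record NotionOfStructure (B E D : Category) (q : Fibration E B) := {
  nfib : Fibration D B;
  chi : Functor D E;
  chi_over_ob : forall d : D, q (chi d) = nfib d;
  chi_over_hom : forall a b (f : hom a b),
      arr (fmap q (fmap chi f)) = arr (fmap nfib f);
  chi_cart : forall a b (f : hom a b),
      cartesian nfib f -> cartesian q (fmap chi f);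
  chi_discrete : discrete_fibration (CartFunctor chi_cart) }.

Arguments NotionOfStructure {B E} D q.
Arguments nfib {B E D q} n.
Arguments chi {B E D q} n.
Arguments chi_cart {B E D q} n a b f _.

Definition CartChi (B E D : Category) (q : Fibration E B)
  (N : NotionOfStructure D q) : Functor (CartCat (nfib N)) (CartCat q) :=
  CartFunctor (chi_cart N).

Section Presheaf.
Variables (B E D : Category) (q : Fibration E B) (N : NotionOfStructure D q)
          (X : E).

Definition slice_ob : Type := {I : B & hom I (q X)}.

Definition slice_hom (c c' : slice_ob) : Type :=
  {u : hom (projT1 c) (projT1 c') | cmp (projT2 c') u = projT2 c}.

Lemma slice_cmp_prf (c c' c'' : slice_ob) (g : slice_hom c' c'') (u : slice_hom c c') :
  cmp (projT2 c'') (cmp (proj1_sig g) (proj1_sig u)) = projT2 c.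
Proof.
  destruct g as [g pg], u as [u pu]; simpl.
  rewrite cmp_assoc, pg; exact pu.
Qed.

Definition slice_cmp (c c' c'' : slice_ob) (g : slice_hom c' c'') (u : slice_hom c c')
  : slice_hom c c'' := exist _ (cmp (proj1_sig g) (proj1_sig u)) (slice_cmp_prf g u).

Definition chibar (c : slice_ob) : Type :=
  {d : D | chi N d = reindex q (projT2 c)}.

(* Graph of the functorial action chibar_X(u) : chibar_X(c') -> chibar_X(c)
   for u : c -> c' : Dv is the domain of the (unique) cartesian lift in
   Cart(chi), with codomain Dw, of the canonical morphism
   w : sigma^* X -> tau^* X over u (tau-bar o w = sigma-bar). *)
Definition chibar_act (c c' : slice_ob) (u : slice_hom c c')
  (Dw : chibar c') (Dv : chibar c) : Prop :=
  exists w : hom (reindex q (projT2 c)) (reindex q (projT2 c')),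
    cmp (clift q (projT2 c')) w = clift q (projT2 c) /\
    arr (fmap q w) = arr (proj1_sig u) /\
    exists v : hom (proj1_sig Dv) (proj1_sig Dw),
      cartesian (nfib N) v /\ arr (fmap (chi N) v) = arr w.

Definition representable : Prop :=
  exists (R : slice_ob) (phi : forall c, slice_hom c R -> chibar c),
    (forall c (g g' : slice_hom c R), phi c g = phi c g' -> g = g') /\
    (forall c (y : chibar c), exists g, phi c g = y) /\
    (forall c c' (u : slice_hom c c') (g : slice_hom c' R),
        chibar_act u (phi c' g) (phi c (slice_cmp g u))).

End Presheaf.

Arguments representable {B E D q} N X.

(* [Cart(chi)] is a discrete fibration, so an arrow [chi d -> X] of
   [Cart(E)] is the same as a cartesian [f : Y -> X] together with a [d] over
   [Y].  Up to isomorphism such an [f] is a chosen lift [sigma^* X -> X], so the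
   comma category [Cart(chi) / X] is the category of elements of [chibar_X];
   a right adjoint means a terminal object there for every [X], i.e. a
   representation of every [chibar_X].  A discrete fibration with a right
   adjoint is comonadic, because structure maps of coalgebras lift uniquely. *)

From Stdlib Require Import Eqdep IndefiniteDescription.
Set Implicit Arguments.
Unset Strict Implicit.

Section Arrows.
Variable C : Category.

Lemma arr_dom (a b a' b' : C) (f : hom a b) (f' : hom a' b') : arr f = arr f' -> a = a'.
Proof. intros H; exact (f_equal (@projT1 _ _) H). Qed.

Lemma arr_cod (a b a' b' : C) (f : hom a b) (f' : hom a' b') : arr f = arr f' -> b = b'.
Proof. intros H; exact (f_equal (fun s => projT1 (projT2 s)) H). Qed.

Lemma arr_inj (a b : C) (f f' : hom a b) : arr f = arr f' -> f = f'.
Proof. unfold arr; intros H; apply inj_pair2 in H; apply inj_pair2 in H; exact H. Qed.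

Lemma arr_cmp (a b c a' b' c' : C) (f : hom a b) (g : hom b c) (f' : hom a' b')
  (g' : hom b' c') :
  arr f = arr f' -> arr g = arr g' -> arr (cmp g f) = arr (cmp g' f').
Proof.
  intros Hf Hg.
  destruct (arr_dom Hf), (arr_cod Hf), (arr_cod Hg).
  apply arr_inj in Hf; apply arr_inj in Hg; subst; reflexivity.
Qed.

Lemma arr_idm (a a' : C) : a = a' -> arr (idm a) = arr (idm a').
Proof. intros ->; reflexivity. Qed.

Definition hom_cast (a b a' b' : C) (ea : a = a') (eb : b = b') (f : hom a' b') : hom a b.
Proof. destruct ea, eb; exact f. Defined.

Lemma arr_hom_cast (a b a' b' : C) (ea : a = a') (eb : b = b') (f : hom a' b') :
  arr (hom_cast ea eb f) = arr f.
Proof. destruct ea, eb; reflexivity. Qed.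

End Arrows.

Arguments hom_cast : simpl never.

Lemma arr_fmap (C D : Category) (F : Functor C D) (a b a' b' : C) (f : hom a b)
  (f' : hom a' b') :
  arr f = arr f' -> arr (fmap F f) = arr (fmap F f').
Proof.
  intros H; destruct (arr_dom H), (arr_cod H).
  apply arr_inj in H; subst; reflexivity.
Qed.

Lemma arr_CartCat (E B : Category) (P : Functor E B) (a b a' b' : CartCat P)
  (f : @hom (CartCat P) a b) (f' : @hom (CartCat P) a' b') :
  @arr (CartCat P) a b f = @arr (CartCat P) a' b' f' <->
  arr (proj1_sig f) = arr (proj1_sig f').
Proof.
  split.
  - intros H.
    exact (f_equal (fun s : {x : CartCat P & {y : CartCat P & @hom (CartCat P) x y}} =>
             arr (proj1_sig (projT2 (projT2 s)))) H).
  - intros H; simpl in *; destruct (arr_dom H), (arr_cod H).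
    apply arr_inj in H; f_equal; f_equal; apply sig_eq_hprop; exact H.
Qed.

Section Cartesian.
Variables (E B : Category) (P : Functor E B).

Lemma cartesian_hom_cast (a b a' b' : E) (ea : a = a') (eb : b = b') (f : hom a' b') :
  cartesian P f -> cartesian P (hom_cast ea eb f).
Proof. destruct ea, eb; auto. Qed.

Lemma cartesian_monic (Y X W : E) (f : hom Y X) (k1 k2 : hom W Y) :
  cartesian P f -> cmp f k1 = cmp f k2 -> arr (fmap P k1) = arr (fmap P k2) -> k1 = k2.
Proof.
  intros Hf H1 H2; apply arr_inj in H2.
  destruct (Hf W (cmp f k1) (fmap P k1)) as [k [_ u]].
  - rewrite fmap_cmp; reflexivity.
  - rewrite (u k1 eq_refl eq_refl); symmetry; apply u; auto.
Qed.

Lemma cartesian_factor (Y X Z : E) (f : hom Y X) (g : hom Z X) (a : B) (h : hom a (P Y)) :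
  cartesian P f -> a = P Z -> arr (cmp (fmap P f) h) = arr (fmap P g) ->
  exists k : hom Z Y, arr (fmap P k) = arr h /\ cmp f k = g.
Proof.
  intros Hf Ha H; subst a; apply arr_inj in H.
  destruct (Hf Z g h H) as [k [[H1 H2] _]].
  exists k; rewrite H1; auto.
Qed.

Lemma cartesian_cancel (W Y X : E) (f : hom Y X) (w : hom W Y) :
  cartesian P f -> cartesian P (cmp f w) -> cartesian P w.
Proof.
  intros Hf Hfw Z g h H.
  destruct (Hfw Z (cmp f g) h) as [k [[Pk Ek] Uk]].
  { rewrite fmap_cmp, <- cmp_assoc, H, fmap_cmp; reflexivity. }
  exists k; split; [split; [exact Pk|]|].
  - apply (cartesian_monic Hf).
    + rewrite cmp_assoc; exact Ek.
    + rewrite fmap_cmp, Pk, H; reflexivity.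
  - intros k' Pk' Ek'; apply Uk; auto; rewrite <- cmp_assoc, Ek'; reflexivity.
Qed.

Lemma iso_cartesian (Y X : E) (f : hom Y X) (f' : hom X Y) :
  cmp f f' = idm X -> cmp f' f = idm Y -> cartesian P f.
Proof.
  intros H1 H2 Z g h H; exists (cmp f' g); split; [split|].
  - rewrite fmap_cmp, <- H, cmp_assoc, <- fmap_cmp, H2, fmap_id, cmp_idl; reflexivity.
  - rewrite cmp_assoc, H1, cmp_idl; reflexivity.
  - intros k' _ Ek; rewrite <- Ek, cmp_assoc, H2, cmp_idl; reflexivity.
Qed.

End Cartesian.

Definition universal_arrow (C D : Category) (L : Functor C D) (X : D) : Prop :=
  exists (R : C) (e : hom (L R) X), forall (c : C) (f : hom (L c) X),
    exists g : hom c R, cmp e (fmap L g) = f /\ forall g', cmp e (fmap L g') = f -> g' = g.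

Lemma right_adjoint_universal_arrow (C D : Category) (L : Functor C D) :
  has_right_adjoint L -> forall X, universal_arrow L X.
Proof.
  intros [R [eta [eps adj]]] X; exists (R X), (eps X); intros c f.
  exists (cmp (fmap R f) (eta c)); split.
  - rewrite fmap_cmp, cmp_assoc, <- (eps_nat adj), <- cmp_assoc, (tri_L adj), cmp_idr.
    reflexivity.
  - intros g' <-.
    rewrite fmap_cmp, <- cmp_assoc, (eta_nat adj), cmp_assoc, (tri_R adj), cmp_idl.
    reflexivity.
Qed.

Section UniversalArrowsAdjoint.
Variables (C D : Category) (L : Functor C D).
Hypothesis univ : forall X, universal_arrow L X.

Definition universal_choice (X : D) :
  {R : C & {e : hom (L R) X | forall (c : C) (f : hom (L c) X),
    exists g : hom c R, cmp e (fmap L g) = f /\ forall g', cmp e (fmap L g') = f -> g' = g}}.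
Proof.
  destruct (constructive_indefinite_description _ (univ X)) as [R HR].
  destruct (constructive_indefinite_description _ HR) as [e He].
  exact (existT _ R (exist _ e He)).
Defined.

Definition radj_ob (X : D) : C := projT1 (universal_choice X).

Definition radj_counit (X : D) : hom (L (radj_ob X)) X :=
  proj1_sig (projT2 (universal_choice X)).

Lemma radj_counit_universal (X : D) (c : C) (f : hom (L c) X) :
  exists g : hom c (radj_ob X), cmp (radj_counit X) (fmap L g) = f /\
    forall g', cmp (radj_counit X) (fmap L g') = f -> g' = g.
Proof. exact (proj2_sig (projT2 (universal_choice X)) c f). Qed.

Definition radj_transpose (X : D) (c : C) (f : hom (L c) X) : hom c (radj_ob X) :=
  proj1_sig (constructive_indefinite_description _ (radj_counit_universal f)).

Lemma radj_transposeK (X : D) (c : C) (f : hom (L c) X) :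
  cmp (radj_counit X) (fmap L (radj_transpose f)) = f.
Proof. unfold radj_transpose; destruct constructive_indefinite_description as [g [Hg ?]]; exact Hg. Qed.

Lemma radj_transpose_unique (X : D) (c : C) (f : hom (L c) X) (g : hom c (radj_ob X)) :
  cmp (radj_counit X) (fmap L g) = f -> g = radj_transpose f.
Proof. unfold radj_transpose; destruct constructive_indefinite_description as [g0 [? Hg]]; auto. Qed.

Lemma radj_transpose_cmp (X : D) (b c : C) (f : hom (L c) X) (h : hom b c) :
  radj_transpose (cmp f (fmap L h)) = cmp (radj_transpose f) h.
Proof.
  symmetry; apply radj_transpose_unique.
  rewrite fmap_cmp, cmp_assoc, radj_transposeK; reflexivity.
Qed.

Definition radj : Functor D C.
Proof.
  refine {| fob := radj_ob;
            fmap := fun a b (h : hom a b) => radj_transpose (cmp h (radj_counit a)) |}.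
  - intros a; symmetry; apply radj_transpose_unique.
    rewrite fmap_id, cmp_idr, cmp_idl; reflexivity.
  - intros a b c g f; symmetry; apply radj_transpose_unique.
    rewrite fmap_cmp, cmp_assoc, radj_transposeK, <- cmp_assoc, radj_transposeK, cmp_assoc.
    reflexivity.
Defined.

Lemma universal_arrow_right_adjoint : has_right_adjoint L.
Proof.
  exists radj, (fun c => radj_transpose (idm (L c))), radj_counit; split; simpl.
  - intros a b f.
    rewrite <- !radj_transpose_cmp, cmp_idl, <- cmp_assoc, radj_transposeK, cmp_idr.
    reflexivity.
  - intros a b g; rewrite radj_transposeK; reflexivity.
  - intros c; apply radj_transposeK.
  - intros d; rewrite <- radj_transpose_cmp, <- cmp_assoc, radj_transposeK, cmp_idr.
    symmetry; apply radj_transpose_unique; rewrite fmap_id, cmp_idr; reflexivity.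
Qed.

End UniversalArrowsAdjoint.

Section FullyFaithfulEso.
Variables (C D : Category) (F : Functor C D).
Hypothesis full : forall a b (h : hom (F a) (F b)), exists g, fmap F g = h.
Hypothesis faithful : forall a b (g g' : hom a b), fmap F g = fmap F g' -> g = g'.
Hypothesis eso : forall d, exists c (i : hom (F c) d) (j : hom d (F c)),
  cmp j i = idm (F c) /\ cmp i j = idm d.

Definition eso_choice (d : D) : {c : C & {i : hom (F c) d & {j : hom d (F c) |
  cmp j i = idm (F c) /\ cmp i j = idm d}}}.
Proof.
  destruct (constructive_indefinite_description _ (eso d)) as [c H1].
  destruct (constructive_indefinite_description _ H1) as [i H2].
  destruct (constructive_indefinite_description _ H2) as [j H3].
  exact (existT _ c (existT _ i (exist _ j H3))).
Defined.

Definition inv_ob (d : D) : C := projT1 (eso_choice d).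
Definition inv_iso (d : D) : hom (F (inv_ob d)) d := projT1 (projT2 (eso_choice d)).
Definition inv_iso' (d : D) : hom d (F (inv_ob d)) := proj1_sig (projT2 (projT2 (eso_choice d))).

Lemma inv_isoK (d : D) : cmp (inv_iso' d) (inv_iso d) = idm _.
Proof. exact (proj1 (proj2_sig (projT2 (projT2 (eso_choice d))))). Qed.

Lemma inv_iso'K (d : D) : cmp (inv_iso d) (inv_iso' d) = idm _.
Proof. exact (proj2 (proj2_sig (projT2 (projT2 (eso_choice d))))). Qed.

Definition preimage (a b : C) (h : hom (F a) (F b)) : hom a b :=
  proj1_sig (constructive_indefinite_description _ (full h)).

Lemma fmap_preimage (a b : C) (h : hom (F a) (F b)) : fmap F (preimage h) = h.
Proof. unfold preimage; destruct constructive_indefinite_description; auto. Qed.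

Definition pseudo_inverse : Functor D C.
Proof.
  refine {| fob := inv_ob;
            fmap := fun a b (h : hom a b) => preimage (cmp (inv_iso' b) (cmp h (inv_iso a))) |}.
  - intros a; apply faithful; rewrite fmap_preimage, fmap_id, cmp_idl, inv_isoK; reflexivity.
  - intros a b c g f; apply faithful; rewrite fmap_cmp, !fmap_preimage, <- !cmp_assoc.
    rewrite (cmp_assoc (inv_iso b)), inv_iso'K, cmp_idl; reflexivity.
Defined.

Lemma fully_faithful_eso_equivalence : IsEquivalence F.
Proof.
  exists pseudo_inverse; split.
  - exists (fun c => preimage (inv_iso (F c))), (fun c => preimage (inv_iso' (F c))); split.
    + intros a b f; simpl; apply faithful.
      rewrite !fmap_cmp, !fmap_preimage, !cmp_assoc, inv_iso'K, cmp_idl; reflexivity.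
    + intros x; split; apply faithful; rewrite fmap_cmp, !fmap_preimage, fmap_id;
        [apply inv_isoK | apply inv_iso'K].
  - exists inv_iso, inv_iso'; split.
    + intros a b f; simpl; rewrite fmap_preimage, !cmp_assoc, inv_iso'K, cmp_idl; reflexivity.
    + intros x; split; [apply inv_isoK | apply inv_iso'K].
Qed.

End FullyFaithfulEso.

Lemma iso_of_eq (C : Category) (x y : C) : x = y ->
  exists (i : hom x y) (j : hom y x), cmp j i = idm x /\ cmp i j = idm y.
Proof. intros ->; exists (idm y), (idm y); split; apply cmp_idl. Qed.

Lemma discrete_fibration_unique (C D : Category) (L : Functor C D) (DF : discrete_fibration L)
  (c c1 c2 : C) (v1 : hom c1 c) (v2 : hom c2 c) :
  arr (fmap L v1) = arr (fmap L v2) -> c1 = c2 /\ arr v1 = arr v2.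
Proof.
  intros H; destruct (DF _ _ (fmap L v2)) as [c' [v [_ U]]].
  pose proof (U c1 v1 H) as E1; rewrite <- (U c2 v2 eq_refl) in E1; split.
  - exact (f_equal (@projT1 _ _) E1).
  - exact (f_equal (fun s : {x : C & hom x c} => @arr C (projT1 s) c (projT2 s)) E1).
Qed.

Section Comonadic.
Variables (C D : Category) (L : Functor C D) (DF : discrete_fibration L).
Variables (R : Functor D C) (eta : forall c, hom c (R (L c)))
          (eps : forall d, hom (L (R d)) d) (adj : IsAdjunction L R eta eps).

Lemma adjunction_transpose (c : C) (d : D) (g : hom c (R d)) :
  g = cmp (fmap R (cmp (eps d) (fmap L g))) (eta c).
Proof.
  rewrite fmap_cmp, <- cmp_assoc, (eta_nat adj), cmp_assoc, (tri_R adj), cmp_idl.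
  reflexivity.
Qed.

(* Every coalgebra is free: its structure map [al] lifts along [L], and the
   counit law forces the lift to be [eta]. *)
Lemma discrete_fibration_comparison_equivalence : IsEquivalence (Comparison adj).
Proof.
  apply fully_faithful_eso_equivalence.
  - intros a b [h Hh]; unfold coalg_str in Hh; simpl in Hh.
    destruct (DF h) as [c0 [g0 [Hg0 _]]].
    assert (E : arr (fmap L (cmp (eta b) g0)) = arr (fmap L (cmp (fmap R h) (eta a)))).
    { rewrite !fmap_cmp; transitivity (arr (cmp (fmap L (eta b)) h)).
      - apply arr_cmp; [exact Hg0 | reflexivity].
      - exact (f_equal (@arr _ _ _) Hh). }
    destruct (discrete_fibration_unique DF E) as [-> _].
    exists g0; apply sig_eq_hprop; apply arr_inj; exact Hg0.
  - intros a b g g' H; apply (f_equal (@proj1_sig _ _)) in H; simpl in H.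
    apply arr_inj, (discrete_fibration_unique DF (v1 := g) (v2 := g')); rewrite H; reflexivity.
  - intros [d [al [H1 H2]]].
    destruct (DF al) as [c' [v [Hv _]]].
    destruct (arr_dom Hv); apply arr_inj in Hv.
    assert (Ev : v = eta c').
    { rewrite (adjunction_transpose v), Hv, H1, fmap_id, cmp_idl; reflexivity. }
    subst v; exists c'; apply iso_of_eq.
    simpl; unfold comparison_ob; f_equal; apply sig_eq_hprop; exact Hv.
Qed.

End Comonadic.

Lemma discrete_fibration_comonadic (C D : Category) (L : Functor C D) :
  discrete_fibration L -> has_right_adjoint L -> comonadic L.
Proof.
  intros DF [R [eta [eps adj]]]; exists R, eta, eps, adj.
  exact (discrete_fibration_comparison_equivalence DF adj).
Qed.

Lemma reindex_over (E B : Category) (q : Fibration E B) (X : E) (I : B) (s : hom I (q X)) :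
  q (reindex q s) = I.
Proof. exact (arr_dom (clift_over s)). Qed.

Section NotionOfStructure.
Variables (B E D : Category) (q : Fibration E B) (N : NotionOfStructure D q).

Lemma chi_cart_lift (c : D) (d : E) (u : hom d (chi N c)) : cartesian q u ->
  exists c' (v : hom c' c), cartesian (nfib N) v /\ arr (fmap (chi N) v) = arr u /\
    forall c'' (v' : hom c'' c), cartesian (nfib N) v' -> arr (fmap (chi N) v') = arr u ->
      c'' = c' /\ arr v' = arr v.
Proof.
  intros Hu.
  destruct (@chi_discrete B E D q N _ _ (exist _ u Hu : @hom (CartCat q) d (chi N c)))
    as [c' [[v Hv] [H1 H2]]].
  exists c', v; split; [exact Hv|]; split; [exact (proj1 (arr_CartCat _ _) H1)|].
  intros c'' v' Hv' E'.
  assert (E3 : existT (fun x : CartCat (nfib N) => @hom (CartCat (nfib N)) x c) c''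
                 (exist _ v' Hv') = existT _ c' (exist _ v Hv)).
  { apply (H2 c'' (exist _ v' Hv')); apply arr_CartCat; exact E'. }
  split.
  - exact (f_equal (@projT1 _ _) E3).
  - exact (f_equal (fun s : {x : CartCat (nfib N) & @hom (CartCat (nfib N)) x c} =>
             @arr D (projT1 s) c (proj1_sig (projT2 s))) E3).
Qed.

Lemma chi_cart_lift_unique (c c1 c2 : D) (v1 : hom c1 c) (v2 : hom c2 c) :
  cartesian (nfib N) v1 -> cartesian (nfib N) v2 ->
  arr (fmap (chi N) v1) = arr (fmap (chi N) v2) -> c1 = c2 /\ arr v1 = arr v2.
Proof.
  intros H1 H2 H.
  destruct (chi_cart_lift (chi_cart N _ _ _ H2)) as [c' [v [_ [_ U]]]].
  destruct (U _ _ H1 H) as [-> A1], (U _ _ H2 eq_refl) as [-> A2].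
  rewrite A1, A2; auto.
Qed.

Lemma chi_cart_faithful (c c' : D) (v1 v2 : hom c' c) :
  cartesian (nfib N) v1 -> cartesian (nfib N) v2 ->
  fmap (chi N) v1 = fmap (chi N) v2 -> v1 = v2.
Proof.
  intros H1 H2 H; apply arr_inj.
  apply (chi_cart_lift_unique H1 H2); rewrite H; reflexivity.
Qed.

Lemma chi_cart_lift_iso (c c' : D) (d : E) (v : hom c' c) (u : hom d (chi N c))
  (u' : hom (chi N c) d) :
  cartesian (nfib N) v -> arr (fmap (chi N) v) = arr u ->
  cmp u u' = idm _ -> cmp u' u = idm _ ->
  exists v' : hom c c', cartesian (nfib N) v' /\ cmp v v' = idm c /\ cmp v' v = idm c'.
Proof.
  intros Hv Ev H1 H2; destruct (arr_dom Ev); apply arr_inj in Ev; subst u.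
  destruct (chi_cart_lift (iso_cartesian (P := q) H2 H1)) as [c'' [v' [Hv' [Ev' _]]]].
  destruct (chi_cart_lift_unique (cartesian_cmp Hv Hv') (@cartesian_id _ _ (nfib N) c))
    as [-> Ea].
  { rewrite fmap_cmp, fmap_id, <- H1; apply arr_cmp; auto. }
  apply arr_inj in Ea; apply arr_inj in Ev'; subst u'.
  exists v'; split; [exact Hv'|]; split; [exact Ea|].
  apply (chi_cart_faithful (cartesian_cmp Hv' Hv) (@cartesian_id _ _ (nfib N) c')).
  rewrite fmap_cmp, fmap_id, H2; reflexivity.
Qed.

Definition cart_universal_arrow (X : E) : Prop :=
  exists (R : D) (e : hom (chi N R) X), cartesian q e /\
    forall (c : D) (f : hom (chi N c) X), cartesian q f ->
      exists g : hom c R, cartesian (nfib N) g /\ cmp e (fmap (chi N) g) = f /\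
        forall g', cartesian (nfib N) g' -> cmp e (fmap (chi N) g') = f -> g' = g.

Lemma universal_arrow_CartChiE (X : E) :
  universal_arrow (CartChi N) X <-> cart_universal_arrow X.
Proof.
  split.
  - intros [R [[e He] U]]; exists R, e; split; [exact He|].
    intros c f Hf; destruct (U c (exist _ f Hf)) as [[g Hg] [E1 U1]].
    apply (f_equal (@proj1_sig _ _)) in E1.
    exists g; split; [exact Hg|]; split; [exact E1|].
    intros g' Hg' E2.
    refine (f_equal (@proj1_sig _ _) (U1 (exist _ g' Hg') _)).
    apply sig_eq_hprop; exact E2.
  - intros [R [e [He U]]]; exists R, (exist _ e He); intros c [f Hf].
    destruct (U c f Hf) as [g [Hg [E1 U1]]].
    exists (exist _ g Hg); split.
    + apply sig_eq_hprop; exact E1.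
    + intros [g' Hg'] E2; apply (f_equal (@proj1_sig _ _)) in E2.
      apply sig_eq_hprop; apply U1; auto.
Qed.

End NotionOfStructure.

Lemma clift_factor (E B : Category) (q : Fibration E B) (X Y : E) (f : hom Y X)
  (I : B) (s : hom I (q X)) (h : hom I (q Y)) :
  cartesian q f -> arr (cmp (fmap q f) h) = arr s ->
  exists w : hom (reindex q s) Y,
    cartesian q w /\ arr (fmap q w) = arr h /\ cmp f w = clift q s.
Proof.
  intros Hf Hh.
  destruct (cartesian_factor (g := clift q s) (h := h) Hf (eq_sym (reindex_over s)))
    as [w [Ew Efw]].
  { rewrite Hh; symmetry; apply clift_over. }
  exists w; split; [|auto].
  apply (cartesian_cancel Hf); rewrite Efw; apply clift_cart.
Qed.

Section UniversalArrowRepresentable.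
Variables (B E D : Category) (q : Fibration E B) (N : NotionOfStructure D q) (X : E).
Variables (R : D) (e : hom (chi N R) X).
Hypothesis e_cart : cartesian q e.
Hypothesis e_universal : forall (c : D) (f : hom (chi N c) X), cartesian q f ->
  exists g : hom c R, cartesian (nfib N) g /\ cmp e (fmap (chi N) g) = f /\
    forall g', cartesian (nfib N) g' -> cmp e (fmap (chi N) g') = f -> g' = g.

Definition universal_slice : slice_ob q X := existT _ (q (chi N R)) (fmap q e).

(* [d] is the pullback of the universal element [R] along [g]. *)
Definition pulls_back (c : slice_ob q X) (g : slice_hom c universal_slice)
  (d : chibar N c) : Prop :=
  exists w : hom (reindex q (projT2 c)) (chi N R),
    arr (fmap q w) = arr (proj1_sig g) /\ cmp e w = clift q (projT2 c) /\
    exists v : hom (proj1_sig d) R, cartesian (nfib N) v /\ arr (fmap (chi N) v) = arr w.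

Lemma pulls_back_exists (c : slice_ob q X) (g : slice_hom c universal_slice) :
  exists d, pulls_back g d.
Proof.
  destruct c as [I s], g as [u Hu]; simpl in *.
  destruct (clift_factor (s := s) (h := u) e_cart) as [w [Hw [Ew Eew]]].
  { rewrite Hu; reflexivity. }
  destruct (chi_cart_lift Hw) as [c' [v [Hv [Ev _]]]].
  exists (exist _ c' (arr_dom Ev)), w; split; [exact Ew|]; split; [exact Eew|].
  exists v; split; assumption.
Qed.

Lemma pulls_back_functional (c : slice_ob q X) (g : slice_hom c universal_slice)
  (d1 d2 : chibar N c) :
  pulls_back g d1 -> pulls_back g d2 -> d1 = d2.
Proof.
  intros [w1 [Ew1 [Eew1 [v1 [Hv1 Ev1]]]]] [w2 [Ew2 [Eew2 [v2 [Hv2 Ev2]]]]].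
  assert (Ew : w1 = w2).
  { apply (cartesian_monic e_cart); [congruence | rewrite Ew1, Ew2; reflexivity]. }
  subst w2; apply sig_eq_hprop.
  apply (chi_cart_lift_unique Hv1 Hv2); rewrite Ev1, Ev2; reflexivity.
Qed.

(* By universality of [e] the two lifts into [R] agree, hence so do their
   images under [chi] and [q]. *)
Lemma pulls_back_injective (c : slice_ob q X) (g g' : slice_hom c universal_slice)
  (d : chibar N c) :
  pulls_back g d -> pulls_back g' d -> g = g'.
Proof.
  intros [w [Ew [Eew [v [Hv Ev]]]]] [w' [Ew' [Eew' [v' [Hv' Ev']]]]].
  assert (Ev'v : v' = v).
  { destruct (e_universal (cartesian_cmp e_cart (chi_cart N _ _ _ Hv)))
      as [g0 [_ [_ U0]]].
    rewrite (U0 v' Hv'), (U0 v Hv); auto.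
    apply arr_inj; transitivity (arr (cmp e w')); [apply arr_cmp; auto|].
    rewrite Eew', <- Eew; symmetry; apply arr_cmp; auto. }
  subst v'; apply sig_eq_hprop, arr_inj.
  rewrite <- Ew, <- Ew'; apply arr_fmap; congruence.
Qed.

Definition classifying_map (c : slice_ob q X) (g : slice_hom c universal_slice) :
  chibar N c :=
  proj1_sig (constructive_indefinite_description _ (pulls_back_exists g)).

Lemma classifying_map_spec (c : slice_ob q X) (g : slice_hom c universal_slice) :
  pulls_back g (classifying_map g).
Proof. unfold classifying_map; destruct constructive_indefinite_description; auto. Qed.

Lemma classifying_map_surjective (c : slice_ob q X) (d : chibar N c) :
  exists g, classifying_map g = d.
Proof.
  destruct c as [I s], d as [d Hd]; simpl in Hd.
  destruct (e_universal (cartesian_hom_cast (ea := Hd) (eb := eq_refl) (clift_cart (f := q) (s := s))))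
    as [g0 [Hg0 [Eg0 _]]].
  assert (EI : I = q (chi N d)) by (rewrite Hd; symmetry; apply reindex_over).
  pose (u := hom_cast EI eq_refl (fmap q (fmap (chi N) g0))).
  assert (Hu : cmp (fmap q e) u = s).
  { apply arr_inj; transitivity (arr (cmp (fmap q e) (fmap q (fmap (chi N) g0)))).
    - apply arr_cmp; [apply arr_hom_cast | reflexivity].
    - rewrite <- fmap_cmp, Eg0.
      transitivity (arr (fmap q (clift q s))); [apply arr_fmap, arr_hom_cast|].
      apply clift_over. }
  exists (exist _ u Hu : slice_hom (existT _ I s) universal_slice).
  apply (pulls_back_functional (classifying_map_spec _)).
  exists (hom_cast (eq_sym Hd) eq_refl (fmap (chi N) g0)); split; [|split].
  - simpl; rewrite (arr_fmap q (arr_hom_cast _ _ _)); symmetry; apply arr_hom_cast.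
  - apply arr_inj; transitivity (arr (hom_cast Hd eq_refl (clift q s))); [|apply arr_hom_cast].
    rewrite <- Eg0; apply arr_cmp; [apply arr_hom_cast | reflexivity].
  - exists g0; split; [exact Hg0 | symmetry; apply arr_hom_cast].
Qed.

Lemma classifying_map_natural (c c' : slice_ob q X) (u : slice_hom c c')
  (g : slice_hom c' universal_slice) :
  chibar_act u (classifying_map g) (classifying_map (slice_cmp g u)).
Proof.
  destruct c as [I s], c' as [J t], u as [u Hu]; simpl in Hu.
  destruct (classifying_map_spec g) as [w1 [Ew1 [Eew1 [v1 [Hv1 Ev1]]]]].
  set (d1 := classifying_map g) in *.
  destruct (clift_factor (s := s) (h := hom_cast eq_refl (reindex_over t) u)
             (clift_cart (f := q) (s := t)))
    as [w [Hw [Ew Etw]]].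
  { simpl; rewrite <- Hu; apply arr_cmp; [apply arr_hom_cast | apply clift_over]. }
  destruct (chi_cart_lift (cartesian_hom_cast (ea := eq_refl) (eb := proj2_sig d1) Hw))
    as [d3 [v3 [Hv3 [Ev3 _]]]].
  rewrite arr_hom_cast in Ev3.
  assert (E3 : exist _ d3 (arr_dom Ev3) = classifying_map (slice_cmp g
                 (exist _ u Hu : slice_hom (existT _ I s) (existT _ J t)))).
  { apply (fun H => pulls_back_functional H (classifying_map_spec _)).
    exists (cmp w1 w); split; [|split].
    - simpl; rewrite fmap_cmp; apply arr_cmp; [rewrite Ew; apply arr_hom_cast | exact Ew1].
    - simpl in Eew1 |- *; rewrite cmp_assoc, Eew1; exact Etw.
    - exists (cmp v1 v3); split; [exact (cartesian_cmp Hv1 Hv3)|].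
      rewrite fmap_cmp; apply arr_cmp; assumption. }
  rewrite <- E3; exists w; split; [exact Etw|]; split.
  - simpl; rewrite Ew; apply arr_hom_cast.
  - exists v3; split; assumption.
Qed.

Lemma universal_arrow_representable : representable N X.
Proof.
  exists universal_slice, classifying_map; split; [|split].
  - intros c g g' H; apply (pulls_back_injective (classifying_map_spec g)).
    rewrite H; apply classifying_map_spec.
  - exact classifying_map_surjective.
  - exact classifying_map_natural.
Qed.

End UniversalArrowRepresentable.

Lemma cartesian_over_idm_iso (E B : Category) (P : Functor E B) (Z Y : E) (w : hom Z Y) :
  cartesian P w -> arr (fmap P w) = arr (idm (P Y)) ->
  exists w' : hom Y Z, cmp w w' = idm Y /\ cmp w' w = idm Z.
Proof.
  intros Hw Ew.
  pose (h := hom_cast (arr_cod Ew) (arr_dom Ew) (idm (P Y))).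
  assert (Eh : arr h = arr (idm (P Y))) by apply arr_hom_cast.
  destruct (cartesian_factor (g := idm Y) (h := h) Hw (arr_cod Ew)) as [w' [Ew' Eww']].
  { rewrite fmap_id; transitivity (arr (cmp (idm (P Y)) (idm (P Y)))).
    - apply arr_cmp; [exact Eh | exact Ew].
    - rewrite cmp_idl; reflexivity. }
  exists w'; split; [exact Eww'|].
  apply (cartesian_monic Hw).
  - rewrite cmp_assoc, Eww', cmp_idl, cmp_idr; reflexivity.
  - rewrite fmap_cmp, fmap_id; transitivity (arr (cmp (idm (P Y)) (idm (P Y)))).
    + apply arr_cmp; [exact Ew | rewrite Ew'; exact Eh].
    + rewrite cmp_idl; apply arr_idm; symmetry; exact (arr_dom Ew).
Qed.

Lemma cartesian_iso_clift (E B : Category) (q : Fibration E B) (X Y : E) (f : hom Y X) :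
  cartesian q f ->
  exists (w : hom (reindex q (fmap q f)) Y) (w' : hom Y (reindex q (fmap q f))),
    cmp w w' = idm Y /\ cmp w' w = idm _ /\ cmp f w = clift q (fmap q f).
Proof.
  intros Hf.
  destruct (clift_factor (s := fmap q f) (h := idm _) Hf) as [w [Hw [Ew Efw]]].
  { rewrite cmp_idr; reflexivity. }
  destruct (cartesian_over_idm_iso Hw Ew) as [w' [H1 H2]].
  exists w, w'; auto.
Qed.

Lemma chi_cart_iso_clift (B E D : Category) (q : Fibration E B) (N : NotionOfStructure D q)
  (X : E) (c : D) (f : hom (chi N c) X) :
  cartesian q f ->
  exists d (Hd : chi N d = reindex q (fmap q f)) (v : hom d c) (v' : hom c d),
    cartesian (nfib N) v /\ cartesian (nfib N) v' /\ cmp v v' = idm c /\ cmp v' v = idm d /\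
    cmp f (fmap (chi N) v) = hom_cast Hd eq_refl (clift q (fmap q f)).
Proof.
  intros Hf; destruct (cartesian_iso_clift Hf) as [w [w' [H1 [H2 Efw]]]].
  destruct (chi_cart_lift (iso_cartesian (P := q) H1 H2)) as [d [v [Hv [Ev _]]]].
  destruct (chi_cart_lift_iso Hv Ev H1 H2) as [v' [Hv' [Ea Eb]]].
  exists d, (arr_dom Ev), v, v'; do 4 (split; [assumption|]).
  apply arr_inj; transitivity (arr (cmp f w)); [apply arr_cmp; auto|].
  rewrite Efw; symmetry; apply arr_hom_cast.
Qed.

Section RepresentableUniversalArrow.
Variables (B E D : Category) (q : Fibration E B) (N : NotionOfStructure D q) (X : E).
Variables (Rs : slice_ob q X) (phi : forall c, slice_hom c Rs -> chibar N c).
Hypothesis phi_inj : forall c (g g' : slice_hom c Rs), phi g = phi g' -> g = g'.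
Hypothesis phi_surj : forall c (y : chibar N c), exists g, phi g = y.
Hypothesis phi_natural : forall c c' (u : slice_hom c c') (g : slice_hom c' Rs),
  chibar_act u (phi g) (phi (slice_cmp g u)).

Definition slice_id : slice_hom Rs Rs := exist _ (idm _) (cmp_idr (projT2 Rs)).

Definition rep_ob : D := proj1_sig (phi slice_id).

Lemma chi_rep_ob : chi N rep_ob = reindex q (projT2 Rs).
Proof. exact (proj2_sig (phi slice_id)). Qed.

Definition rep_counit : hom (chi N rep_ob) X := hom_cast chi_rep_ob eq_refl (clift q (projT2 Rs)).

Lemma rep_counit_cartesian : cartesian q rep_counit.
Proof. apply cartesian_hom_cast, clift_cart. Qed.

(* Naturality at the identity of the representing object: [phi g] is the
   pullback of [rep_ob] along [g]. *)
Lemma phi_pullback (c : slice_ob q X) (g : slice_hom c Rs) :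
  exists w : hom (reindex q (projT2 c)) (reindex q (projT2 Rs)),
    cmp (clift q (projT2 Rs)) w = clift q (projT2 c) /\
    arr (fmap q w) = arr (proj1_sig g) /\
    exists v : hom (proj1_sig (phi g)) rep_ob,
      cartesian (nfib N) v /\ arr (fmap (chi N) v) = arr w.
Proof.
  assert (Eid : slice_cmp slice_id g = g) by (apply sig_eq_hprop, cmp_idl).
  pose proof (phi_natural g slice_id) as H; rewrite Eid in H; exact H.
Qed.

Lemma rep_factor_exists (I : B) (s : hom I (q X)) (d : D) (Hd : chi N d = reindex q s) :
  exists g : hom d rep_ob, cartesian (nfib N) g /\
    cmp rep_counit (fmap (chi N) g) = hom_cast Hd eq_refl (clift q s).
Proof.
  destruct (phi_surj (exist _ d Hd : chibar N (existT _ I s))) as [g Eg].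
  pose proof (phi_pullback g) as H; rewrite Eg in H.
  destruct H as [w [Ew [_ [v [Hv Ev]]]]].
  exists v; split; [exact Hv|]; apply arr_inj.
  rewrite arr_hom_cast; simpl in Ew; rewrite <- Ew.
  apply arr_cmp; [exact Ev | apply arr_hom_cast].
Qed.

Lemma rep_counit_over : arr (fmap q rep_counit) = arr (projT2 Rs).
Proof. unfold rep_counit; rewrite (arr_fmap q (arr_hom_cast _ _ _)); apply clift_over. Qed.

Lemma rep_factor_classifies (I : B) (s : hom I (q X)) (d : D) (Hd : chi N d = reindex q s)
  (g : hom d rep_ob) :
  cartesian (nfib N) g -> cmp rep_counit (fmap (chi N) g) = hom_cast Hd eq_refl (clift q s) ->
  exists u : slice_hom (existT _ I s) Rs,
    arr (proj1_sig u) = arr (fmap q (fmap (chi N) g)) /\ phi u = exist _ d Hd.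
Proof.
  intros Hg Eg.
  assert (EI : I = q (chi N d)) by (rewrite Hd; symmetry; apply reindex_over).
  assert (ER : projT1 Rs = q (chi N rep_ob))
    by (rewrite chi_rep_ob; symmetry; apply reindex_over).
  pose (u := hom_cast EI ER (fmap q (fmap (chi N) g))).
  assert (Hu : cmp (projT2 Rs) u = s).
  { apply arr_inj; transitivity (arr (fmap q (clift q s))); [|apply clift_over].
    transitivity (arr (fmap q (cmp rep_counit (fmap (chi N) g)))).
    - rewrite fmap_cmp; apply arr_cmp; [apply arr_hom_cast | symmetry; apply rep_counit_over].
    - rewrite Eg; apply arr_fmap, arr_hom_cast. }
  exists (exist _ u Hu); split; [apply arr_hom_cast|].
  destruct (phi_pullback (exist _ u Hu : slice_hom (existT _ I s) Rs))
    as [w [Ew [Eqw [v [Hv Ev]]]]].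
  assert (Ewg : w = hom_cast (eq_sym Hd) (eq_sym chi_rep_ob) (fmap (chi N) g)).
  { apply (cartesian_monic (clift_cart (f := q) (s := projT2 Rs))).
    - rewrite Ew; apply arr_inj.
      transitivity (arr (hom_cast Hd eq_refl (clift q s))); [symmetry; apply arr_hom_cast|].
      rewrite <- Eg; apply arr_cmp; [symmetry | ]; apply arr_hom_cast.
    - rewrite Eqw, (arr_fmap q (arr_hom_cast _ _ _)); apply arr_hom_cast. }
  apply sig_eq_hprop; simpl.
  apply (chi_cart_lift_unique Hv Hg).
  rewrite Ev, Ewg; apply arr_hom_cast.
Qed.

Lemma rep_factor_unique (I : B) (s : hom I (q X)) (d : D) (Hd : chi N d = reindex q s)
  (g1 g2 : hom d rep_ob) :
  cartesian (nfib N) g1 -> cartesian (nfib N) g2 ->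
  cmp rep_counit (fmap (chi N) g1) = hom_cast Hd eq_refl (clift q s) ->
  cmp rep_counit (fmap (chi N) g2) = hom_cast Hd eq_refl (clift q s) -> g1 = g2.
Proof.
  intros Hg1 Hg2 Eg1 Eg2.
  destruct (rep_factor_classifies Hg1 Eg1) as [u1 [Eu1 Hu1]].
  destruct (rep_factor_classifies Hg2 Eg2) as [u2 [Eu2 Hu2]].
  assert (Eu : u1 = u2) by (apply phi_inj; congruence).
  apply (chi_cart_faithful Hg1 Hg2), (cartesian_monic rep_counit_cartesian); [congruence|].
  rewrite <- Eu1, <- Eu2, Eu; reflexivity.
Qed.

(* Every cartesian [f] into [X] is isomorphic to a chosen lift, where the
   factorization through [rep_counit] is given by representability. *)
Lemma rep_cart_universal_arrow : cart_universal_arrow N X.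
Proof.
  exists rep_ob, rep_counit; split; [exact rep_counit_cartesian|].
  intros c f Hf.
  destruct (chi_cart_iso_clift Hf) as [d [Hd [v [v' [Hv [Hv' [Ea [? Efv]]]]]]]].
  destruct (rep_factor_exists Hd) as [g [Hg Eg]].
  exists (cmp g v'); split; [exact (cartesian_cmp Hg Hv')|]; split.
  - rewrite fmap_cmp, cmp_assoc, Eg, <- Efv, <- cmp_assoc, <- fmap_cmp, Ea, fmap_id, cmp_idr.
    reflexivity.
  - intros g' Hg' Eg'.
    rewrite <- (cmp_idr g'), <- Ea, cmp_assoc; f_equal.
    apply (rep_factor_unique (Hd := Hd) (cartesian_cmp Hg' Hv) Hg); [|exact Eg].
    rewrite fmap_cmp, cmp_assoc, Eg'; exact Efv.
Qed.

End RepresentableUniversalArrow.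

Lemma representable_cart_universal_arrow (B E D : Category) (q : Fibration E B)
  (N : NotionOfStructure D q) (X : E) :
  representable N X -> cart_universal_arrow N X.
Proof. intros [Rs [phi [Hinj [Hsurj Hnat]]]]; exact (rep_cart_universal_arrow Hinj Hsurj Hnat). Qed.

Theorem mainTheorem4 (B E D : Category) (q : Fibration E B)
  (N : NotionOfStructure D q) :
  ((forall X : E, representable N X) <-> has_right_adjoint (CartChi N)) /\
  (has_right_adjoint (CartChi N) <-> comonadic (CartChi N)).
Proof.
  split; split.
  - intros Hrep; apply universal_arrow_right_adjoint; intros X.
    apply universal_arrow_CartChiE, representable_cart_universal_arrow, Hrep.
  - intros Hadj X.
    destruct (proj1 (universal_arrow_CartChiE N X) (right_adjoint_universal_arrow Hadj X))
      as [R [e [He Hu]]].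
    exact (universal_arrow_representable He Hu).
  - apply discrete_fibration_comonadic, chi_discrete.
  - intros [R [eta [eps [adj _]]]]; exists R, eta, eps; exact adj.
Qed.
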